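(* Let $R$ be a finite transitive permutation group of degree $n$. Then $R$ has at most \[ 7.3722 \cdot n^{\frac{\log_2 n}{4} + 1.8919} \] systems of imprimitivity. *)

From mathcomp Require Import all_boot all_fingroup.
From Stdlib Require Import Reals.

Set Implicit Arguments.
Unset Strict Implicit.
Unset Printing Implicit Defensive.

(* Trivial systems (singletons, whole set) are included. *)
Definition block_system (T : finType) (G : {group {perm T}}) (P : {set {set T}}) : bool :=
  partition P [set: T] &&
  [forall g in G, forall B in P, [set g x | x in B] \in P].

Definition num_block_systems (T : finType) (G : {group {perm T}}) : nat :=
  #|[set P : {set {set T}} | block_system G P]|.

Definition log2R (x : R) : R := (ln x / ln 2)%R.

(* A block system of the transitive group G is determined by its block through a
   point a, hence by the setwise stabilizer of that block, which is a subgroup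
   between the point stabilizer K and G.  For any subgroup S of G, the overgroups
   of S of order M < 2^(j+1) |S| number at most (2 |G|)^j / M^j: double count the
   pairs (H, g) with g in H \ S and recurse on <S, g>, which at least doubles |S|.
   Taking S = K and M = i |K| with 2^j <= i < 2^(j+1) leaves at most
   (2n)^j / 2^(j^2) <= 2^(log2(2n)^2 / 4) overgroups for each of the n + 1
   possible indices i, where n = |G : K| = #|T|, and
   (n + 1) 2^(log2(2n)^2 / 4) <= 2^(5/4) n^(log2 n / 4 + 3/2). *)

From mathcomp Require Import all_boot all_fingroup zify.
From Stdlib Require Import Reals Lra.

Set Implicit Arguments.
Unset Strict Implicit.
Unset Printing Implicit Defensive.

(* Importing Reals rebinds [^] on nat to Nat.pow; restore ssrnat's expn. *)
Local Notation "m ^ n" := (expn m n) : nat_scope.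

Lemma sum_card_setI_count (I T : finType) (F : {set I}) (A : I -> {set T}) (X : {set T}) :
  \sum_(i in F) #|A i :&: X| = \sum_(x in X) #|[set i in F | x \in A i]|.
Proof.
under eq_bigr do rewrite -sum1_card.
rewrite (exchange_big_dep (mem X)) => [|i x _]; last by case/setIP.
apply: eq_bigr => x Xx; rewrite -sum1_card; apply: eq_bigl => i.
by rewrite !inE (Xx : x \in X) andbT.
Qed.

Section Overgroups.

Variable gT : finGroupType.
Implicit Types (G H K S : {group gT}) (M : nat).

Definition intermediate_groups K G : {set {group gT}} :=
  [set H : {group gT} | (K \subset H) && (H \subset G)].

Definition overgroups_of_order G S M : {set {group gT}} :=
  [set H in intermediate_groups S G | #|H| == M].

Lemma proper_card_double S H : S \proper H -> 2 * #|S| <= #|H|.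
Proof.
case/andP=> sSH not_sHS.
by rewrite -(Lagrange sSH) mulnC leq_pmul2l ?cardG_gt0 // indexg_gt1.
Qed.

Lemma card_overgroups_of_order_le1 G S M :
  M < 2 * #|S| -> #|overgroups_of_order G S M| <= 1.
Proof.
move=> ltM; rewrite -(cards1 S); apply/subset_leq_card/subsetP => H.
rewrite !inE => /andP[/andP[sSH _] /eqP oH]; apply: contraTT ltM => neHS.
rewrite -leqNgt -oH proper_card_double // properEneq sSH andbT.
by apply: contra neHS => /eqP eSH; apply/eqP; apply: val_inj; rewrite /= eSH.
Qed.

Lemma card_overgroups_of_order_mulexp_le G S M j :
  S \subset G -> M < 2 ^ j.+1 * #|S| ->
  #|overgroups_of_order G S M| * M ^ j <= (2 * #|G|) ^ j.
Proof.
elim: j S => [|j IHj] S sSG ltM.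
  by rewrite !expn0 muln1 card_overgroups_of_order_le1.
set A := overgroups_of_order G S M.
have [ltM2|leM2] := ltnP M (2 * #|S|).
  rewrite -[X in _ <= X]mul1n leq_mul ?card_overgroups_of_order_le1 //.
  by rewrite leq_exp2r // ltnW // (leq_trans ltM2) // leq_mul2l subset_leq_card.
have countA : #|A| * (M - #|S|) = \sum_(g in G :\: S) #|[set H in A | g \in H]|.
  rewrite -sum_nat_const -sum_card_setI_count; apply: eq_bigr => H.
  rewrite !inE => /andP[/andP[sSH sHG] /eqP oH].
  by rewrite setIDA (setIidPl sHG) cardsDS // oH.
have fiberA g : g \in G :\: S -> #|[set H in A | g \in H]| * M ^ j <= (2 * #|G|) ^ j.
  case/setDP=> Gg notSg; set Sg := (S <*> <[g]>)%G.
  have Sg_g : g \in Sg by rewrite (subsetP (joing_subr _ _)) ?cycle_id.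
  apply: leq_trans (IHj Sg _ _).
  - rewrite leq_mul2r subset_leq_card ?orbT //; apply/subsetP => H.
    rewrite !inE => /andP[/andP[/andP[sSH sHG] oH] gH].
    by rewrite join_subG sSH cycle_subG gH sHG oH.
  - by rewrite join_subG sSG cycle_subG.
  - rewrite (leq_trans ltM) // [2 ^ j.+2]expnS -mulnA mulnCA leq_mul2l.
    rewrite proper_card_double ?orbT //.
    rewrite properE joing_subl; apply: contra notSg => /subsetP; exact.
rewrite expnS mulnA.
have halfM : M <= 2 * (M - #|S|) by lia.
apply: leq_trans (leq_mul (leq_mul (leqnn #|A|) halfM) (leqnn _)) _.
rewrite mulnCA countA expnS -!mulnA leq_mul2l /= big_distrl /=.
apply: (@leq_trans (\sum_(g in G :\: S) (2 * #|G|) ^ j)); first exact: leq_sum.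
by rewrite sum_nat_const leq_mul2r subset_leq_card ?orbT // subsetDl.
Qed.

End Overgroups.

Section RealBounds.

Local Open Scope R_scope.

Lemma exp_le_exp x y : x <= y -> exp x <= exp y.
Proof. by case/Rle_lt_or_eq_dec=> [/exp_increasing/Rlt_le | ->]; [|apply: Rle_refl]. Qed.

Lemma ln2_gt0 : 0 < ln 2.
Proof. by have := ln_lt_2; lra. Qed.

Lemma le_exp_sq_ln (a x : R) (j : nat) :
  0 < x -> a * 2 ^ (j * j) <= x ^ j -> a <= exp (ln x ^ 2 / (4 * ln 2)).
Proof.
move=> x_gt0; have l_gt0 := ln2_gt0.
have -> : x ^ j = exp (INR j * ln x) by rewrite -Rpower_pow.
have -> : 2 ^ (j * j) = exp (INR j * INR j * ln 2) by rewrite -mult_INR -Rpower_pow //; lra.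
set u := ln x; set y := INR j; move=> le_ax.
have le_a : a <= exp (y * u - y * y * ln 2).
  apply: (Rmult_le_reg_r (exp (y * y * ln 2))); first exact: exp_pos.
  by rewrite -exp_plus; ring_simplify (y * u - y * y * ln 2 + y * y * ln 2).
apply: (Rle_trans _ _ _ le_a); apply: exp_le_exp.
have sq_ge0 : 0 <= (u - 2 * y * ln 2) ^ 2 / (4 * ln 2).
  by apply: Rmult_le_pos; [apply: pow2_ge_0 | apply/Rlt_le/Rinv_0_lt_compat; lra].
have -> : u ^ 2 / (4 * ln 2) = (u - 2 * y * ln 2) ^ 2 / (4 * ln 2) + (y * u - y * y * ln 2).
  by field; lra.
lra.
Qed.

Lemma ln_ge0 x : 1 <= x -> 0 <= ln x.
Proof.
case/Rle_lt_or_eq_dec=> [lt1x | <-]; last by rewrite ln_1; apply: Rle_refl.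
by rewrite -ln_1; apply/Rlt_le/ln_increasing; lra.
Qed.

Lemma succ_mul_exp_sq_ln_le_Rpower x : 1 <= x ->
  (x + 1) * exp (ln (2 * x) ^ 2 / (4 * ln 2)) <=
  73722 / 10000 * Rpower x (log2R x / 4 + 18919 / 10000).
Proof.
move=> x_ge1; rewrite /Rpower /log2R ln_mult; try lra.
set t := ln x; set l := ln 2.
have t_ge0 : 0 <= t := ln_ge0 x_ge1; have l_gt0 : 0 < l := ln2_gt0.
have le_x1 : x + 1 <= exp (l + t) by rewrite exp_plus /l /t !exp_ln; lra.
have le_exp54 : exp (5 / 4 * l) <= 4.
  apply: (Rle_trans _ (exp (l + l))); first by apply: exp_le_exp; lra.
  by rewrite exp_plus /l exp_ln; lra.
apply: (Rle_trans _ (exp (l + t) * exp ((l + t) ^ 2 / (4 * l)))).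
  by apply: Rmult_le_compat_r; first exact/Rlt_le/exp_pos.
rewrite -exp_plus.
have -> : l + t + (l + t) ^ 2 / (4 * l) = 5 / 4 * l + (t / l / 4 * t + 3 / 2 * t).
  by field; lra.
rewrite exp_plus.
have : exp (t / l / 4 * t + 3 / 2 * t) <= exp ((t / l / 4 + 18919 / 10000) * t).
  by apply: exp_le_exp; nra.
have := exp_pos (t / l / 4 * t + 3 / 2 * t).
have := exp_pos (5 / 4 * l).
nra.
Qed.

Lemma INR_muln m k : INR (m * k)%nat = INR m * INR k.
Proof. by rewrite -multE mult_INR. Qed.

Lemma INR_expn m k : INR (m ^ k)%nat = INR m ^ k.
Proof. by elim: k => [|k IHk] //; rewrite expnS INR_muln IHk. Qed.

End RealBounds.

Section OvergroupBounds.

Local Open Scope R_scope.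

Lemma card_overgroups_of_index_le (gT : finGroupType) (G K : {group gT}) i :
  K \subset G ->
  INR #|overgroups_of_order G K (i * #|K|)| <=
  exp (ln (2 * INR #|G : K|%g) ^ 2 / (4 * ln 2)).
Proof.
move=> sKG; set a := #|_|; set n := #|G : K|%g; set j := trunc_log 2 i.
have pow2_le : ((2 ^ j) ^ j <= i ^ j)%nat.
  have [i0 | i_gt0] := posnP i; first by rewrite /j i0 trunc_log0.
  have [-> // | j_gt0] := posnP j.
  by rewrite leq_exp2r // trunc_logP.
have := card_overgroups_of_order_mulexp_le (j := j) (M := i * #|K|) sKG.
rewrite ltn_pmul2r ?cardG_gt0 // trunc_log_ltn // => /(_ isT).
have -> : ((2 * #|G|) ^ j = (2 * n) ^ j * #|K| ^ j)%nat.
  by rewrite -(Lagrange sKG) mulnCA expnMn mulnC.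
rewrite [((i * _) ^ _)%nat]expnMn mulnA leq_pmul2r ?expn_gt0 ?cardG_gt0 //.
move=> /(leq_trans (leq_mul (leqnn a) pow2_le)); rewrite -expnM => /leP /le_INR.
have INR2 : INR 2 = 2 by rewrite /=; lra.
rewrite INR_muln !INR_expn INR_muln INR2 => le_a.
apply: le_exp_sq_ln le_a; apply: Rmult_lt_0_compat; first lra.
exact/lt_0_INR/ltP/indexg_gt0.
Qed.

Lemma card_intermediate_groups_le (gT : finGroupType) (G K : {group gT}) :
  K \subset G ->
  INR #|intermediate_groups K G| <=
  INR #|G : K|%g.+1 * exp (ln (2 * INR #|G : K|%g) ^ 2 / (4 * ln 2)).
Proof.
move=> sKG; set n := #|G : K|%g.
pose A (i : 'I_n.+1) := overgroups_of_order G K (i * #|K|).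
have le_sumA : (#|intermediate_groups K G| <= \sum_(i < n.+1) #|A i|)%nat.
  pose index_of (H : {group gT}) : 'I_n.+1 := inord #|H : K|%g.
  rewrite -sum1_card (partition_big index_of xpredT) //=.
  apply: leq_sum => i _; rewrite sum1_card; apply/subset_leq_card/subsetP => H.
  rewrite unfold_in !inE => /andP[/andP[sKH sHG] /eqP <-]; rewrite sKH sHG /=.
  have le_HK : (#|H : K|%g < n.+1)%nat.
    by rewrite ltnS dvdn_leq ?indexg_gt0 ?indexSg.
  by rewrite inordK // mulnC Lagrange.
have [i0 _ maxA] := @arg_maxnP _ (@ord0 n) xpredT (fun i => #|A i|) isT.
have le_maxA : (#|intermediate_groups K G| <= n.+1 * #|A i0|)%nat.
  apply: leq_trans le_sumA _; rewrite -[n.+1 in X in (_ <= X)%nat]card_ord -sum_nat_const.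
  by apply: leq_sum => i _; apply: maxA.
apply: Rle_trans (le_INR _ _ (leP le_maxA)) _; rewrite INR_muln.
apply: Rmult_le_compat_l; [exact: pos_INR | exact: card_overgroups_of_index_le].
Qed.

End OvergroupBounds.

Lemma eq_partition_pblock (T : finType) (P Q : {set {set T}}) (D : {set T}) :
  partition P D -> partition Q D -> {in D, pblock P =1 pblock Q} -> P = Q.
Proof.
move=> partP partQ eqPQ.
rewrite -(equivalence_partition_pblock partP) -(equivalence_partition_pblock partQ).
by apply: eq_in_imset => x Dx; apply/setP => y; rewrite !inE eqPQ.
Qed.

Section BlockSystems.

Variables (T : finType) (G : {group {perm T}}).
Implicit Types (P Q : {set {set T}}) (g : {perm T}) (x : T).

Lemma block_system_partition P : block_system G P -> partition P [set: T].
Proof. by case/andP. Qed.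

Lemma pblock_perm P g x :
  block_system G P -> g \in G -> pblock P (g x) = g @: pblock P x.
Proof.
case/andP=> /and3P[/eqP covP trivP _] /forall_inP stabP Gg.
have Px : pblock P x \in P by rewrite pblock_mem // covP inE.
apply: def_pblock => //; first by move/forall_inP: (stabP g Gg); apply.
by rewrite imset_f // mem_pblock covP inE.
Qed.

Variable a : T.

Definition block_stabilizer P : {group {perm T}} := 'N_G(pblock P a | 'P)%G.

Lemma mem_block_stabilizer P g : block_system G P ->
  (g \in block_stabilizer P) = (g \in G) && (g a \in pblock P a).
Proof.
move=> sysP; rewrite inE; apply: andb_id2l => Gg.
have /and3P[/eqP covP trivP _] := block_system_partition sysP.
have aPa : a \in pblock P a by rewrite mem_pblock covP inE.
apply/astabsP/idP => [stab_g | gPa x]; first by rewrite -(stab_g a) in aPa.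
have fixB : g @: pblock P a = pblock P a by rewrite -pblock_perm // (same_pblock trivP gPa).
by rewrite /= apermE -{1}fixB mem_imset //; apply: perm_inj.
Qed.

Lemma point_stabilizer_sub_block_stabilizer P :
  block_system G P -> ('C_G[a | 'P])%g \subset block_stabilizer P.
Proof.
move=> sysP; apply/subsetP => g /setIP[Gg /astab1P /= ga].
have /and3P[/eqP covP _ _] := block_system_partition sysP.
by rewrite mem_block_stabilizer // Gg -apermE ga mem_pblock covP inE.
Qed.

Hypothesis transG : [transitive G, on [set: T] | 'P].

Lemma block_system_eq P Q : block_system G P -> block_system G Q ->
  pblock P a = pblock Q a -> P = Q.
Proof.
move=> sysP sysQ eqPQa.
apply: eq_partition_pblock (block_system_partition sysP) (block_system_partition sysQ) _.
move=> x _; have [g Gg ->] := atransP2 transG (in_setT a) (in_setT x).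
by rewrite /= apermE !pblock_perm // eqPQa.
Qed.

Lemma block_stabilizer_inj P Q : block_system G P -> block_system G Q ->
  block_stabilizer P = block_stabilizer Q -> P = Q.
Proof.
move=> sysP sysQ eqPQ; apply: block_system_eq => //; apply/setP => x.
have [g Gg ->] := atransP2 transG (in_setT a) (in_setT x).
by have := mem_block_stabilizer g sysP; rewrite eqPQ mem_block_stabilizer // Gg.
Qed.

Lemma num_block_systems_le :
  (num_block_systems G <= #|intermediate_groups 'C_G[a | 'P]%G G|)%nat.
Proof.
rewrite /num_block_systems -(card_in_imset (f := block_stabilizer)); last first.
  by move=> P Q; rewrite !inE; apply: block_stabilizer_inj.
apply/subset_leq_card/subsetP => H /imsetP[P]; rewrite inE => sysP ->.
by rewrite inE point_stabilizer_sub_block_stabilizer // subsetIl.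
Qed.

End BlockSystems.

Theorem corollary1p2 (T : finType) (G : {group {perm T}}) :
  (0 < #|T|)%N ->
  [transitive G, on [set: T] | 'P] ->
  (INR (num_block_systems G) <=
     (73722 / 10000) *
     Rpower (INR #|T|) (log2R (INR #|T|) / 4 + 18919 / 10000))%R.
Proof.
move=> T_gt0 transG; have [a _] := card_gt0P T_gt0.
have indexGa : #|G : 'C_G[a | 'P]|%g = #|T|.
  by rewrite -card_orbit (atransP transG) ?cardsT.
apply: Rle_trans (le_INR _ _ (leP (num_block_systems_le a transG))) _.
apply: Rle_trans (card_intermediate_groups_le (subsetIl G _)) _.
rewrite indexGa S_INR; apply: succ_mul_exp_sq_ln_le_Rpower.
by apply: (le_INR 1); apply/leP.
Qed.
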